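(* Let $l\ge 0$ and $k\ge 1$ be integers, $n=k+l$, $e=2^l$, and $p\in[0,1]$ with $q=1-p$. Let $\mathcal{V}=\{\mathbf{r}=(r_0,\dots,r_n)\in\mathbb{Z}_{\ge 0}^{n+1}: \sum_{j=0}^n r_j=e\}$ (the set of ''possible rows''), and for $\mathbf{r}\in\mathcal{V}$ put $\pi(\mathbf{r})=\sum_{j=0}^n r_j\,p^{j}q^{n-j}$ and $f(\mathbf{r})=-\pi(\mathbf{r})\log_2\pi(\mathbf{r})$. Let $V^*(l,k,p)$ be the optimal value of the linear program $$\text{maximize } \sum_{\mathbf{r}\in\mathcal{V}} f(\mathbf{r})\,x_{\mathbf{r}}\quad\text{subject to}\quad \sum_{\mathbf{r}\in\mathcal{V}} r_j\,x_{\mathbf{r}}=\binom{n}{j}\ (j=0,\dots,n),\qquad x_{\mathbf{r}}\ge 0\ (\mathbf{r}\in\mathcal{V}).$$ Then for every binning code $\mathcal{B}_1,\dots,\mathcal{B}_{2^k}$ (a partition of $\{0,1\}^n$ into $2^k$ bins, each of size $2^l$), used over the wiretap channel with noiseless main channel and BSC($p$) wiretap channel as described in the context, the eavesdropper's equivocation satisfies $H(M\mid Z^n)\le V^*(l,k,p)$.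
   Context: Wiretap model: a message $M$ is uniform on $\{1,\dots,2^k\}$; the encoder maps message $i$ to a codeword $X^n$ chosen uniformly at random from bin $\mathcal{B}_i$ (so $X^n$ is uniform on $\{0,1\}^n$). The legitimate receiver observes $X^n$ exactly; the eavesdropper observes $Z^n$, the output of a binary symmetric channel with crossover probability $p$ applied to $X^n$. For an observation $z^n$, $P(x^n\mid z^n)=p^{d_H(x^n,z^n)}q^{n-d_H(x^n,z^n)}$ ($d_H$ = Hamming distance), $P_{\mathcal{B}_i}(z^n)=\sum_{x^n\in\mathcal{B}_i}P(x^n\mid z^n)$, $H(M\mid Z^n=z^n)=-\sum_{i=1}^{2^k}P_{\mathcal{B}_i}(z^n)\log_2 P_{\mathcal{B}_i}(z^n)$, and the (total) equivocation is $H(M\mid Z^n)=2^{-n}\sum_{z^n\in\{0,1\}^n}H(M\mid Z^n=z^n)$. Convention $0\log_2 0=0$. *)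

From HB Require Import structures.
From mathcomp Require Import all_boot all_order all_algebra.
From mathcomp Require Import all_classical all_reals.
From mathcomp Require Import exp.
Set Implicit Arguments. Unset Strict Implicit. Unset Printing Implicit Defensive.
Import Order.TTheory GRing.Theory Num.Theory.
Local Open Scope ring_scope.

Section Wiretap.
Variable R : realType.

Definition xlog2 (y : R) : R := if y == 0 then 0 else y * (ln y / ln 2).

Definition word (n : nat) := {ffun 'I_n -> bool}.

Definition hamming (n : nat) (x z : word n) : nat := #|[set i | x i != z i]|.

Definition Pxz (p : R) (n : nat) (x z : word n) : R :=
  p ^+ hamming x z * (1 - p) ^+ (n - hamming x z).

Definition Pbin (p : R) (n : nat) (A : {set word n}) (z : word n) : R :=
  \sum_(x in A) Pxz p x z.

Definition Hcond (p : R) (k n : nat) (B : 'I_(2 ^ k) -> {set word n}) (z : word n) : R :=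
  - \sum_(i : 'I_(2 ^ k)) xlog2 (Pbin p (B i) z).

Definition equivocation (p : R) (k n : nat) (B : 'I_(2 ^ k) -> {set word n}) : R :=
  (2 ^+ n)^-1 * \sum_(z : word n) Hcond p B z.

Definition binning_code (k l : nat) (B : 'I_(2 ^ k) -> {set word (k + l)}) : Prop :=
  [/\ forall i, #|B i| = (2 ^ l)%N,
      forall i j, i != j -> [disjoint B i & B j]
    & forall x, exists i, x \in B i].

(* candidate rows: (r_0..r_n) with entries in [0, e]; valid iff sum = e = 2^l *)
Definition rowT (l k : nat) := {ffun 'I_(k + l).+1 -> 'I_(2 ^ l).+1}.

Definition row_ok (l k : nat) (r : rowT l k) : bool :=
  (\sum_(j : 'I_(k + l).+1) (r j : nat) == 2 ^ l)%N.

Definition pi_row (l k : nat) (p : R) (r : rowT l k) : R :=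
  \sum_(j : 'I_(k + l).+1) (r j : nat)%:R * p ^+ j * (1 - p) ^+ (k + l - j).

Definition f_row (l k : nat) (p : R) (r : rowT l k) : R := - xlog2 (pi_row p r).

Definition LP_feasible (l k : nat) (x : rowT l k -> R) : Prop :=
  (forall j : 'I_(k + l).+1,
     \sum_(r | row_ok r) (r j : nat)%:R * x r = ('C(k + l, j))%:R)
  /\ (forall r, row_ok r -> 0 <= x r).

Definition LP_objective (l k : nat) (p : R) (x : rowT l k -> R) : R :=
  \sum_(r | row_ok r) f_row p r * x r.

Local Open Scope classical_set_scope.
Definition Vstar (l k : nat) (p : R) : R :=
  sup [set LP_objective p x | x in @LP_feasible l k].

End Wiretap.

From HB Require Import structures.
From mathcomp Require Import all_boot all_order all_algebra.
From mathcomp Require Import all_classical all_reals.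
Set Implicit Arguments. Unset Strict Implicit. Unset Printing Implicit Defensive.
Import Order.TTheory GRing.Theory Num.Theory.
Local Open Scope ring_scope.

(* For every observation z and bin i, the row of distance counts
   r(z, i) = (#{x in B_i | d_H(x, z) = j})_j lies in V, and P_{B_i}(z) = pi(r(z, i)).
   Hence the equivocation is the LP objective at x_r = 2^-n #{(z, i) | r(z, i) = r}.
   This point is feasible, because for fixed z and j the bins split the Hamming
   sphere of radius j around z, which has C(n, j) elements. Feasible points are
   bounded, so the objective is bounded by the supremum V*(l, k, p). *)

Lemma sumr_comp_fiber (V : nmodType) (T I : finType) (A : {pred T}) (P : {pred I})
    (phi : T -> I) (F : I -> V) :
  {in A, forall x, P (phi x)} ->
  \sum_(x in A) F (phi x) = \sum_(i | P i) F i *+ #|[set x in A | phi x == i]|.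
Proof.
move=> AP; rewrite (partition_big phi P) //=; apply: eq_bigr => i _.
rewrite (eq_bigr (fun=> F i)) => [|x /andP[_ /eqP ->]] //.
by rewrite sumr_const; congr (_ *+ _); apply: eq_card => x; rewrite !inE.
Qed.
Arguments sumr_comp_fiber {V T I A} P phi F.

Section HammingSpheres.
Variable n : nat.
Implicit Types (x z : word n) (A : {set word n}).

Lemma hamming_ltnS x z : (hamming x z < n.+1)%N.
Proof. by rewrite ltnS /hamming -[X in (_ <= X)%N](card_ord n) max_card. Qed.

Definition hamming_ord x z : 'I_n.+1 := Ordinal (hamming_ltnS x z).

Definition dist_count A z (j : 'I_n.+1) : nat := #|[set x in A | hamming_ord x z == j]|.

Lemma card_hamming_sphere z (j : nat) : #|[set x | hamming x z == j]| = 'C(n, j).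
Proof.
pose flips x := [set i | x i != z i].
have flips_inj : injective flips.
  move=> x y /setP xy; apply/ffunP => i; move: (xy i); rewrite !inE.
  by case: (x i); case: (y i); case: (z i).
rewrite -(card_imset _ flips_inj) -[X in 'C(X, _)](card_ord n) -card_draws.
apply: eq_card => S; rewrite !inE; apply/imsetP/idP => [[x] | cardS].
  by rewrite inE => /eqP <- ->.
pose x : word n := [ffun i => if i \in S then ~~ z i else z i].
have flipsx : flips x = S.
  by apply/setP => i; rewrite !inE ffunE; case: (i \in S); case: (z i).
by exists x; rewrite // inE /hamming -/(flips x) flipsx.
Qed.

Lemma sum_dist_count A z : (\sum_j dist_count A z j)%N = #|A|.
Proof.
rewrite -sum1_card (sumr_comp_fiber predT (hamming_ord^~ z) (fun=> 1%N)) //.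
by apply: eq_bigr => j _; rewrite natn.
Qed.

Lemma Pbin_dist_count (R : realType) (p : R) A z :
  Pbin p A z = \sum_j (dist_count A z j)%:R * (p ^+ j * (1 - p) ^+ (n - j)).
Proof.
under eq_bigr do rewrite mulr_natl.
by rewrite -(sumr_comp_fiber predT (hamming_ord^~ z)).
Qed.

Lemma sum_dist_count_partition (I : finType) (B : I -> {set word n}) z j :
  (forall i i', i != i' -> [disjoint B i & B i']) -> (forall x, exists i, x \in B i) ->
  (\sum_i dist_count (B i) z j)%N = 'C(n, j).
Proof.
move=> disjB coverB; have [b Bb] := fin_all_exists coverB.
have inB x i : (x \in B i) = (b x == i).
  apply/idP/eqP => [xBi | <-] //; apply/eqP; apply: contraT => /disjB.
  by move/disjointFr/(_ (Bb x)); rewrite xBi.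
rewrite -(card_hamming_sphere z j) -sum1_card (sumr_comp_fiber predT b (fun=> 1%N)) //.
apply: eq_bigr => i _; rewrite natn; apply: eq_card => x.
by rewrite !inE inB andbC.
Qed.

End HammingSpheres.

Section LinearProgram.
Variables (R : realType) (l k : nat) (p : R).
Implicit Types (x : rowT l k -> R) (r : rowT l k).

Lemma LP_feasible_le x r : LP_feasible x -> row_ok r ->
  x r <= \sum_(j < (k + l).+1) ('C(k + l, j))%:R.
Proof.
move=> [xmarg x_ge0] okr.
have x_le_rowsum : x r <= (\sum_j ((r j : nat)%:R : R)) * x r.
  apply: ler_peMl; first exact: x_ge0.
  by rewrite -natr_sum (eqP okr) natrX exprn_ege1 // ler1n.
apply: (le_trans x_le_rowsum); rewrite mulr_suml; apply: ler_sum => j _.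
rewrite -xmarg (bigD1 r) //= lerDl sumr_ge0 // => r' /andP[okr' _].
by rewrite mulr_ge0 // x_ge0.
Qed.

Lemma LP_objective_le_Vstar x : LP_feasible x -> LP_objective p x <= Vstar l k p.
Proof.
move=> xfeas; apply: sup_upper_bound; last by exists x.
split; first by exists (LP_objective p x), x.
exists (\sum_(r : rowT l k | row_ok r)
          `|f_row p r| * \sum_(j < (k + l).+1) ('C(k + l, j))%:R).
move=> _ [y yfeas <-]; apply: ler_sum => r okr.
have [_ y_ge0] := yfeas.
apply: (le_trans (ler_wpM2r (y_ge0 r okr) (ler_norm _))).
by rewrite ler_wpM2l // LP_feasible_le.
Qed.

End LinearProgram.

Section BinningRows.
Variables (l k : nat) (B : 'I_(2 ^ k) -> {set word (k + l)}).
Hypothesis hB : binning_code B.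

Definition row_profile (z : word (k + l)) (i : 'I_(2 ^ k)) : rowT l k :=
  [ffun j => inord (dist_count (B i) z j)].

Lemma row_profileE z i j : row_profile z i j = dist_count (B i) z j :> nat.
Proof.
have [cardB _ _] := hB; rewrite ffunE inordK // ltnS -(cardB i).
by rewrite /dist_count setIdE subset_leq_card // subsetIl.
Qed.

Lemma row_profile_ok z i : row_ok (row_profile z i).
Proof.
have [cardB _ _] := hB.
rewrite /row_ok (eq_bigr (dist_count (B i) z)) => [|j _]; last exact: row_profileE.
by rewrite sum_dist_count cardB.
Qed.

Lemma pi_row_profile (R : realType) (p : R) z i :
  pi_row p (row_profile z i) = Pbin p (B i) z.
Proof.
by rewrite Pbin_dist_count; apply: eq_bigr => j _; rewrite row_profileE mulrA.
Qed.

Lemma sum_row_profile z j : (\sum_i row_profile z i j)%N = 'C(k + l, j).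
Proof.
have [_ disjB coverB] := hB; rewrite -(sum_dist_count_partition z j disjB coverB).
by apply: eq_bigr => i _; rewrite row_profileE.
Qed.

Variable R : realType.

Definition profile_freq (r : rowT l k) : R :=
  (2 ^+ (k + l))^-1 * #|[set u | row_profile u.1 u.2 == r]|%:R.

Lemma sum_profile_freq (F : rowT l k -> R) :
  \sum_(r | row_ok r) F r * profile_freq r
    = (2 ^+ (k + l))^-1 * \sum_z \sum_i F (row_profile z i).
Proof.
rewrite pair_bigA (sumr_comp_fiber (A := predT) (@row_ok l k) (fun u => row_profile u.1 u.2));
  last by move=> u _; apply: row_profile_ok.
by rewrite mulr_sumr; apply: eq_bigr => r _; rewrite /profile_freq mulrCA mulr_natr.
Qed.

Lemma profile_freq_feasible : LP_feasible profile_freq.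
Proof.
split=> [j|r _]; last by rewrite mulr_ge0 // invr_ge0 exprn_ge0.
rewrite sum_profile_freq.
under eq_bigr do rewrite -natr_sum sum_row_profile.
rewrite sumr_const card_ffun card_bool card_ord -(mulr_natl _ (2 ^ (k + l))) natrX.
by rewrite mulrA mulVf ?mul1r // expf_neq0 // pnatr_eq0.
Qed.

Lemma LP_objective_profile_freq (p : R) :
  LP_objective p profile_freq = equivocation p B.
Proof.
rewrite /LP_objective sum_profile_freq /equivocation; congr (_ * _).
apply: eq_bigr => z _; rewrite /Hcond -sumrN.
by apply: eq_bigr => i _; rewrite /f_row pi_row_profile.
Qed.

End BinningRows.

Unset Implicit Arguments.

Theorem lemma1 (R : realType) (l k : nat) (hk : (1 <= k)%N)
  (p : R) (hp0 : 0 <= p) (hp1 : p <= 1)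
  (B : 'I_(2 ^ k) -> {set word (k + l)}) (hB : binning_code B) :
  equivocation p B <= Vstar l k p.
Proof.
rewrite -(LP_objective_profile_freq hB).
exact/LP_objective_le_Vstar/profile_freq_feasible.
Qed.
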